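(* Let $R$ be a commutative multiplicative hyperring with identity, let $\alpha$ be a good endomorphism of $R$, and let $I$ be an $\alpha$-prime hyperideal of $R$. Then $E=\{s\in R:\alpha(s)\in I\}$ is an $\alpha$-prime hyperideal of $R$ containing $I$.
   Context: A multiplicative hyperring is an abelian group $(R,+)$ with a hyperoperation $\circ:R\times R\to \mathcal P^*(R)$ (nonempty subsets) such that $a\circ(b\circ c)=(a\circ b)\circ c$, $a\circ(b+c)\subseteq a\circ b+a\circ c$, $(b+c)\circ a\subseteq b\circ a+c\circ a$, and $a\circ(-b)=(-a)\circ b=-(a\circ b)$. Products of subsets are unions of elementwise products. Commutative means $a\circ b=b\circ a$. An identity $1$ satisfies $a\in1\circ a$ for all $a$. A hyperideal is a nonempty $I\subseteq R$ closed under subtraction with $r\circ x\subseteq I$ for $r\in R$, $x\in I$. Standing assumption: every hyperideal is a $\mathbf C$-hyperideal, i.e. for every finite product $A=r_1\circ\cdots\circ r_n$, $A\cap I\ne\emptyset$ implies $A\subseteq I$. A good endomorphism $\alpha$ satisfies $\alpha(x+y)=\alpha(x)+\alpha(y)$ and $\alpha(x\circ y)=\alpha(x)\circ\alpha(y)$; it is applied to sets elementwise. A hyperideal $I$ is $\alpha$-prime if for all $x,y$, $x\circ y\subseteq I$ implies $x\in I$ or $\alpha(y)\in I$. *)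

From mathcomp Require Import all_boot all_algebra.
Set Implicit Arguments. Unset Strict Implicit. Unset Printing Implicit Defensive.
Import GRing.Theory.
Local Open Scope ring_scope.

Section Hyper.
Variable R : zmodType.

(* A hyperoperation: [hop a b] is the hsubset a o b of R. *)
Definition hyperop := R -> R -> (R -> Prop).

Definition hsubset (A B : R -> Prop) := forall x, A x -> B x.
Definition set_eq (A B : R -> Prop) := forall x, A x <-> B x.

Definition hset_mul (h : hyperop) (A B : R -> Prop) : R -> Prop :=
  fun z => exists a b, A a /\ B b /\ h a b z.
Definition sing (a : R) : R -> Prop := fun z => z = a.
Definition set_add (A B : R -> Prop) : R -> Prop :=
  fun z => exists a b, A a /\ B b /\ z = a + b.
Definition set_opp (A : R -> Prop) : R -> Prop := fun z => A (- z).

Definition mult_hyperring (h : hyperop) : Prop :=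
  [/\ (forall a b, exists z, h a b z),
      (forall a b c, set_eq (hset_mul h (sing a) (h b c)) (hset_mul h (h a b) (sing c))),
      (forall a b c, hsubset (h a (b + c)) (set_add (h a b) (h a c))),
      (forall a b c, hsubset (h (b + c) a) (set_add (h b a) (h c a)))
    & (forall a b, set_eq (h a (- b)) (h (- a) b) /\ set_eq (h (- a) b) (set_opp (h a b)))].

Definition hcommutative (h : hyperop) : Prop := forall a b, set_eq (h a b) (h b a).

Definition has_identity (h : hyperop) : Prop := exists one : R, forall a, h one a a.

Definition hyperideal (h : hyperop) (I : R -> Prop) : Prop :=
  [/\ (exists x, I x),
      (forall x y, I x -> I y -> I (x - y))
    & (forall r x, I x -> hsubset (h r x) I)].

(* finite product r0 o r1 o ... o rn (left-bracketed; by associativity any bracketing) *)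
Fixpoint hprod (h : hyperop) (A : R -> Prop) (rs : seq R) : R -> Prop :=
  match rs with
  | [::] => A
  | r :: rs' => hprod h (hset_mul h A (sing r)) rs'
  end.
Definition finite_hprod (h : hyperop) (r0 : R) (rs : seq R) := hprod h (sing r0) rs.

Definition C_hyperideal (h : hyperop) (I : R -> Prop) : Prop :=
  forall r0 rs, (exists z, finite_hprod h r0 rs z /\ I z) ->
    hsubset (finite_hprod h r0 rs) I.

Definition good_endomorphism (h : hyperop) (alpha : R -> R) : Prop :=
  (forall x y, alpha (x + y) = alpha x + alpha y) /\
  (forall x y, set_eq (fun z => exists w, h x y w /\ z = alpha w) (h (alpha x) (alpha y))).

Definition alpha_prime (h : hyperop) (alpha : R -> R) (I : R -> Prop) : Prop :=
  hyperideal h I /\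
  (forall x y, hsubset (h x y) I -> I x \/ I (alpha y)).

End Hyper.

(* The preimage [E] of [I] under [alpha] inherits the hyperideal axioms because
   [alpha] is additive and [alpha (x o y) = alpha x o alpha y]; the same equation
   transports [alpha]-primeness from [I] to [E].  For [I] inside [E], take [x] in
   [I]: then [1 o x] lies in [I], so either [alpha x] is in [I] or [1] is, and in
   the second case [I] is the whole hyperring. *)
From mathcomp Require Import all_boot all_algebra.
Set Implicit Arguments. Unset Strict Implicit.
Import GRing.Theory.
Local Open Scope ring_scope.

Section Hyperideals.
Variables (R : zmodType) (h : hyperop R).

Lemma hyperideal0 (I : R -> Prop) : hyperideal h I -> I 0.
Proof. by case=> [[x Ix] Isub _]; rewrite -(subrr x); apply: Isub. Qed.

Lemma hyperideal_full_of_identity (I : R -> Prop) (one : R) :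
  hcommutative h -> (forall a, h one a a) -> hyperideal h I -> I one ->
  forall a, I a.
Proof. by move=> Hcomm Hone [_ _ Imul] I1 a; apply: (Imul a one I1); apply/Hcomm. Qed.

End Hyperideals.

Section GoodEndomorphism.
Variables (R : zmodType) (h : hyperop R) (alpha : R -> R).
Hypothesis Halpha : good_endomorphism h alpha.

Lemma good_endoB x y : alpha (x - y) = alpha x - alpha y.
Proof.
case: Halpha => Hadd _.
by apply: (addIr (alpha y)); rewrite -Hadd !subrK.
Qed.

Lemma good_endo0 : alpha 0 = 0.
Proof. by rewrite -[in alpha _](subrr 0) good_endoB subrr. Qed.

Lemma good_endo_hmul x y z : h x y z -> h (alpha x) (alpha y) (alpha z).
Proof. by case: Halpha => _ Hmul Hz; apply/Hmul; exists z. Qed.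

Lemma hyperideal_preimage (I : R -> Prop) :
  hyperideal h I -> hyperideal h (I \o alpha).
Proof.
move=> HI; have I0 := hyperideal0 HI; case: HI => _ Isub Imul; split.
- by exists 0; rewrite /= good_endo0.
- by move=> x y Ix Iy; rewrite /= good_endoB; apply: Isub.
- by move=> r x Ix z /good_endo_hmul; apply: Imul.
Qed.

Lemma alpha_prime_preimage (I : R -> Prop) :
  alpha_prime h alpha I -> alpha_prime h alpha (I \o alpha).
Proof.
case=> HI Ipr; split; first exact: hyperideal_preimage.
move=> x y Hxy; apply: Ipr => _ /(proj2 Halpha) [w [Hw ->]].
exact: Hxy.
Qed.

Lemma alpha_prime_sub_preimage (I : R -> Prop) :
  hcommutative h -> has_identity h -> alpha_prime h alpha I ->
  hsubset I (I \o alpha).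
Proof.
move=> Hcomm [one Hone] [HI Ipr] x Ix.
have [I1|//] : I one \/ I (alpha x) by apply: Ipr; case: HI => _ _; apply.
exact: (hyperideal_full_of_identity Hcomm Hone HI I1).
Qed.

End GoodEndomorphism.

Theorem mainTheorem5 (R : zmodType) (h : hyperop R)
  (Hhr : mult_hyperring h) (Hcomm : hcommutative h) (Hid : has_identity h)
  (HC : forall J : R -> Prop, hyperideal h J -> C_hyperideal h J)
  (alpha : R -> R) (Halpha : good_endomorphism h alpha)
  (I : R -> Prop) (HI : alpha_prime h alpha I) :
  alpha_prime h alpha (fun s => I (alpha s)) /\ hsubset I (fun s => I (alpha s)).
Proof.
split; first exact: alpha_prime_preimage.
exact: alpha_prime_sub_preimage.
Qed.
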